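(* Let $\Gamma$ be a weighted digraph with vertex set $\{1,\dots,n\}$, $n>1$, without loops and with strictly positive arc weights, with Laplacian matrix $L$. Let $\lambda_i\neq0$ be an eigenvalue of $L$. Then every nonzero column of $Q(-\lambda_i^{-1})$ is an eigenvector of $L$ corresponding to $\lambda_i$.
   Context: $W=(w_{ij})$ is the matrix of arc weights ($w_{ij}>0$ iff there is an arc $i\to j$, else $0$). The Laplacian $L=(\ell_{ij})$: $\ell_{ij}=-w_{ij}$ for $j\ne i$, $\ell_{ii}=\sum_{k\ne i}w_{ik}$. The weight of a subgraph is the product of its arc weights (1 if no arcs); the weight of a set of subgraphs is the sum of their weights (0 for the empty set). A converging tree is a weakly connected digraph with one vertex (the root) of outdegree 0 and all others of outdegree 1; an in-forest is a spanning subgraph of $\Gamma$ whose weak components are converging trees. $Q_k=(q^k_{ij})$ where $q^k_{ij}$ is the total weight of in-forests with $k$ arcs in which $i$ lies in a tree rooted at $j$, and for $\tau\in\mathbb C$, $Q(\tau)=\sum_{k\ge0}Q_k\tau^k$ (a finite sum). *)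

From HB Require Import structures.
From mathcomp Require Import all_boot all_order all_algebra.
Set Implicit Arguments. Unset Strict Implicit. Unset Printing Implicit Defensive.
Import Order.TTheory GRing.Theory Num.Theory.
Local Open Scope ring_scope.

(* Scalars live in a numeric closed field C (e.g. the complex
   numbers); arc weights are nonnegative elements of C (hence real).  A weighted digraph is given by its weight matrix W:
   there is an arc i -> j iff i != j and W i j != 0 (then W i j > 0). *)

Section Forests.
Variables (C : numClosedFieldType) (n : nat) (W : 'M[C]_n).

Definition is_arc (a : 'I_n * 'I_n) : bool := (a.1 != a.2) && (W a.1 a.2 != 0).

Definition laplacian : 'M[C]_n :=
  \matrix_(i, j) (if i == j then \sum_(k | k != i) W i k else - W i j).

(* A subgraph (spanning, on all vertices) is a set of arcs of Gamma. *)
Definition outdeg (F : {set 'I_n * 'I_n}) (v : 'I_n) : nat :=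
  #|[set a in F | a.1 == v]|.

Definition weakly_conn (F : {set 'I_n * 'I_n}) : rel 'I_n :=
  connect [rel x y | ((x, y) \in F) || ((y, x) \in F)].

Definition wcomp (F : {set 'I_n * 'I_n}) (x : 'I_n) : {set 'I_n} :=
  [set y | weakly_conn F x y].

(* a weak component is a converging tree: exactly one vertex (the root) of
   outdegree 0, all other vertices of outdegree 1 (it is weakly connected by
   construction). *)
Definition converging_tree_comp (F : {set 'I_n * 'I_n}) (S : {set 'I_n}) : bool :=
  [exists r in S, (outdeg F r == 0%N) &&
     [forall v in S, (v != r) ==> (outdeg F v == 1%N)]].

Definition in_forest (F : {set 'I_n * 'I_n}) : bool :=
  [forall a in F, is_arc a] && [forall x, converging_tree_comp F (wcomp F x)].

Definition in_tree_rooted (F : {set 'I_n * 'I_n}) (i j : 'I_n) : bool :=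
  weakly_conn F i j && (outdeg F j == 0%N).

Definition sg_weight (F : {set 'I_n * 'I_n}) : C := \prod_(a in F) W a.1 a.2.

Definition Qk (k : nat) : 'M[C]_n :=
  \matrix_(i, j) \sum_(F : {set 'I_n * 'I_n} | in_forest F && (#|F| == k)
                                             && in_tree_rooted F i j) sg_weight F.

(* Q(tau) = sum_k Q_k tau^k; Q_k = 0 for k > n*n since a subgraph has at most
   n*n arcs, so this finite sum is the whole sum. *)
Definition Qtau (tau : C) : 'M[C]_n := \sum_(k < (n * n).+1) tau ^+ k *: Qk k.

End Forests.

From HB Require Import structures.
From mathcomp Require Import all_boot all_order all_algebra ring.
Set Implicit Arguments. Unset Strict Implicit. Unset Printing Implicit Defensive.
Import Order.TTheory GRing.Theory Num.Theory.
Local Open Scope ring_scope.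

(* An in-forest is encoded by the map p sending every vertex to the head of its
   out-arc and every root to itself; the maps arising this way are those whose
   orbits all end in a fixed point ([acyclic]), and [sink p v] is then the root
   of the tree of v.  Let q_ij be the weight of the forests in which i lies in
   the tree rooted at j, and c the weight of all forests.  Then
   q_ij + sum_m w_im (q_ij - q_mj) = [i = j] c, i.e. (I + L) Q = c I: grafting
   the root i onto a vertex m outside its tree turns the forests in which i is
   a root into those in which it is not, and on the latter the sum over m is
   antisymmetric under exchanging m with the head of the arc leaving i.
   Scaling the weights by tau gives Q(tau) + tau L Q(tau) = c(tau) I.  For
   tau = -1/lambda a left eigenvector of L for lambda annihilates the left-hand
   side, so c(tau) = 0 and L Q(tau) = lambda Q(tau). *)

Section RootedMaps.
Variable n : nat.
Implicit Types (p : {ffun 'I_n -> 'I_n}) (i m v : 'I_n).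

Definition sink p v := iter n p v.
Definition terminates p v := p (sink p v) == sink p v.
Definition acyclic p := [forall v, terminates p v].

Definition redirect p i m : {ffun 'I_n -> 'I_n} :=
  [ffun v => if v == i then m else p v].

Lemma iter_fixed p v k : p v = v -> iter k p v = v.
Proof. by move=> pv; elim: k => //= k ->. Qed.

Lemma sink_id p v : p v = v -> sink p v = v.
Proof. exact: iter_fixed. Qed.

Lemma terminatesP p v :
  reflect (exists k, p (iter k p v) = iter k p v) (terminates p v).
Proof.
apply: (iffP eqP) => [|[k fixk]]; first by exists n.
have vk := fconnect_iter p k v.
have first_k := iter_findex vk.
(* the orbit of v meets its fixed point within [order p v <= n] steps *)
have le_n : (findex p v (iter k p v) <= n)%N.
  apply/ltnW/(leq_trans (findex_max vk)).
  by apply: leq_trans (max_card _) _; rewrite card_ord.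
set d := findex p v _ in first_k le_n.
have -> : sink p v = iter (n - d) p (iter d p v) by rewrite -iterD subnK.
by rewrite first_k iter_fixed.
Qed.

Lemma terminates_step p v : terminates p (p v) = terminates p v.
Proof.
apply/terminatesP/terminatesP => [[k fixk]|[k fixk]].
  by exists k.+1; rewrite iterSr.
by exists k; rewrite -iterSr iterS fixk.
Qed.

Lemma sink_fixed p v : acyclic p -> p (sink p v) = sink p v.
Proof. by move/forallP/(_ v)/eqP. Qed.

Lemma sink_step p v : acyclic p -> sink p (p v) = sink p v.
Proof. by move=> acyc; rewrite /sink -iterSr iterS sink_fixed. Qed.

Lemma acyclic_ind p (P : 'I_n -> Prop) : acyclic p ->
  (forall v, (p v != v -> P (p v)) -> P v) -> forall v, P v.
Proof.
move=> /forallP acyc IH v; have /terminatesP[k] := acyc v.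
elim: k v => [|k IHk] v fixk; apply: IH => moved.
  by rewrite fixk eqxx in moved.
by apply: IHk; rewrite -iterSr.
Qed.

Lemma redirectE p i m v : redirect p i m v = if v == i then m else p v.
Proof. by rewrite ffunE. Qed.

Lemma redirect_at p i m : redirect p i m i = m.
Proof. by rewrite redirectE eqxx. Qed.

Lemma redirect_other p i m v : v != i -> redirect p i m v = p v.
Proof. by rewrite redirectE => /negPf->. Qed.

Lemma redirect_redirect p i m m' : redirect (redirect p i m) i m' = redirect p i m'.
Proof. by apply/ffunP => v; rewrite !redirectE; case: eqP. Qed.

Lemma redirect_id p i : redirect p i (p i) = p.
Proof. by apply/ffunP => v; rewrite redirectE; case: eqP => // ->. Qed.

Lemma terminates_redirect p i m v : v != i ->
  (p v != v -> terminates (redirect p i m) (p v)) -> terminates (redirect p i m) v.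
Proof.
move=> vi IH; case: (eqVneq (p v) v) => [pv|moved].
  by apply/terminatesP; exists 0%N; rewrite /= redirect_other.
by rewrite -terminates_step redirect_other // IH.
Qed.

Lemma acyclic_cut p i : acyclic p -> acyclic (redirect p i i).
Proof.
move=> acyc; apply/forallP; apply: (acyclic_ind acyc) => v IH.
case: (eqVneq v i) => [->|vi]; last exact: terminates_redirect.
by apply/terminatesP; exists 0%N; rewrite /= redirect_at.
Qed.

Lemma off_tree_neq p i v : p i = i -> sink p v != i -> v != i.
Proof. by move=> i_root; apply: contraNneq => ->; rewrite sink_id. Qed.

Section Graft.
Variables (p : {ffun 'I_n -> 'I_n}) (i m : 'I_n).
Hypotheses (acyc : acyclic p) (i_root : p i = i).

Lemma acyclic_graft : sink p m != i -> acyclic (redirect p i m).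
Proof.
move=> sink_m; have off_tree v : sink p v != i -> terminates (redirect p i m) v.
  move: v; apply: (acyclic_ind acyc) => v IH sink_v.
  apply: terminates_redirect (off_tree_neq i_root sink_v) _ => moved.
  by rewrite IH ?sink_step.
apply/forallP; apply: (acyclic_ind acyc) => v IH.
case: (eqVneq v i) => [->|vi]; last exact: terminates_redirect.
by rewrite -terminates_step redirect_at off_tree.
Qed.

Lemma sink_graft v : sink p m != i ->
  sink (redirect p i m) v = if sink p v == i then sink p m else sink p v.
Proof.
move=> sink_m; have acyc' := acyclic_graft sink_m.
move: v; apply: (acyclic_ind acyc') => v IH.
case: (eqVneq (redirect p i m v) v) => [qv|moved].
  rewrite sink_id //; move: qv; rewrite redirectE; case: (eqVneq v i) => [->|vi pv].
    by move=> mi; rewrite mi (sink_id i_root) eqxx in sink_m.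
  by rewrite sink_id // (negPf vi).
rewrite -sink_step // IH //; move: moved; rewrite redirectE.
case: (eqVneq v i) => [-> _|vi _]; first by rewrite (negPf sink_m) (sink_id i_root) eqxx.
by rewrite sink_step.
Qed.

Lemma graft_cycle : m != i -> sink p m = i -> ~~ acyclic (redirect p i m).
Proof.
move=> mi sink_m; apply/negP => acyc'; set q := redirect p i m in acyc'.
have in_tree k : sink p (iter k q i) = i.
  elim: k => [|k IHk]; first exact: sink_id.
  by rewrite iterS redirectE; case: eqP => // _; rewrite sink_step.
have := sink_fixed i acyc'; have := in_tree n; rewrite -/(sink q i).
case: (eqVneq (sink q i) i) => [->|ri].
  by rewrite redirect_at => _ /eqP; rewrite (negPf mi).
rewrite redirect_other // => r_tree /sink_id.
by rewrite r_tree => /eqP; rewrite eq_sym (negPf ri).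
Qed.

Lemma acyclic_graftE : m != i -> acyclic (redirect p i m) = (sink p m != i).
Proof.
move=> mi; apply/idP/idP => [|]; last exact: acyclic_graft.
by apply: contraL => /eqP; exact: graft_cycle.
Qed.

End Graft.

Lemma sum_acyclic_nonroot (M : nmodType) i (F : {ffun 'I_n -> 'I_n} -> M) :
  \sum_(p | acyclic p && (p i != i)) F p =
  \sum_(p | acyclic p && (p i == i)) \sum_(a | sink p a != i) F (redirect p i a).
Proof.
rewrite pair_big_dep (reindex (fun p => (redirect p i i, p i))) /=; last first.
  exists (fun x => redirect x.1 i x.2) => [p _|[p a]].
    by rewrite redirect_redirect redirect_id.
  rewrite inE /= => /andP[/andP[_ /eqP i_root] _].
  by rewrite redirect_redirect redirect_at -{2}i_root redirect_id.
apply: eq_big => [p|p _]; last by rewrite redirect_redirect redirect_id.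
rewrite redirect_at eqxx andbT; case: (eqVneq (p i) i) => [i_root|moved].
  by rewrite i_root sink_id ?redirect_at // eqxx !andbF.
rewrite andbT; set p0 := redirect p i i.
have p0_root : p0 i = i by rewrite redirect_at.
have p_graft : redirect p0 i (p i) = p by rewrite redirect_redirect redirect_id.
apply/idP/andP => [acyc|[acyc0 sink_pi]]; last by rewrite -p_graft acyclic_graft.
have acyc0 := acyclic_cut i acyc.
by rewrite -acyclic_graftE // p_graft.
Qed.

End RootedMaps.

Lemma sumr_skew (R : comPzRingType) (I : finType) (P : pred I) (x y : I -> R) :
  \sum_(a | P a) \sum_(b | P b) (x a * y b - y a * x b) = 0.
Proof.
under eq_bigr do rewrite sumrB -!mulr_sumr.
by rewrite sumrB -!mulr_suml mulrC subrr.
Qed.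

Section ForestIdentity.
Variables (R : comPzRingType) (n : nat) (W : 'M[R]_n).
Implicit Types (p : {ffun 'I_n -> 'I_n}) (i j m v : 'I_n).

Definition nonroots p := [set v | p v != v].
Definition fweight p := \prod_(v in nonroots p) W v (p v).
Definition forest_sum i j := \sum_(p | acyclic p && (sink p i == j)) fweight p.
Definition forest_total := \sum_(p | acyclic p) fweight p.

Lemma nonroots_graft p i m : p i = i -> m != i ->
  nonroots (redirect p i m) = i |: nonroots p.
Proof.
move=> i_root mi; apply/setP => v; rewrite !inE redirectE.
by case: (eqVneq v i) => [->|].
Qed.

Lemma fweight_graft p i m : p i = i -> m != i ->
  fweight (redirect p i m) = W i m * fweight p.
Proof.
move=> i_root mi; rewrite /fweight nonroots_graft // big_setU1 ?inE ?i_root ?eqxx //=.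
rewrite redirect_at; congr (_ * _); apply: eq_bigr => v; rewrite inE => moved.
by rewrite redirect_other //; apply: contraNneq moved => ->; rewrite i_root.
Qed.

Variables i j : 'I_n.
Let delta v : R := (v == j)%:R.
Definition outflow p := \sum_m W i m * (delta (sink p i) - delta (sink p m)).

Lemma forest_sumE v :
  forest_sum v j = \sum_(p | acyclic p) fweight p * delta (sink p v).
Proof.
by rewrite /forest_sum big_mkcondr; apply: eq_bigr => p _; rewrite mulr_natr mulrb.
Qed.

Lemma sum_off_tree p (x : 'I_n) (t : 'I_n -> 'I_n) :
  (forall m, sink p m == i -> t m = x) ->
  \sum_m W i m * (delta x - delta (t m)) =
  \sum_(m | sink p m != i) W i m * (delta x - delta (t m)).
Proof.
move=> tx; rewrite (bigID (fun m => sink p m == i)) /= big1 ?add0r // => m /tx ->.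
by rewrite subrr mulr0.
Qed.

Lemma outflow_root p : acyclic p -> p i = i ->
  fweight p * outflow p =
  \sum_(m | sink p m != i)
     fweight (redirect p i m) * (delta i - delta (sink (redirect p i m) i)).
Proof.
move=> acyc i_root; rewrite /outflow (sink_id i_root).
rewrite (@sum_off_tree p i (sink p)) => [|m /eqP] //.
rewrite mulr_sumr; apply: eq_bigr => m sink_m.
rewrite fweight_graft ?(off_tree_neq i_root sink_m) // sink_graft //.
by rewrite (sink_id i_root) eqxx mulrCA mulrA.
Qed.

Lemma outflow_graft p a : acyclic p -> p i = i -> sink p a != i ->
  outflow (redirect p i a) =
  \sum_(m | sink p m != i) W i m * (delta (sink p a) - delta (sink p m)).
Proof.
move=> acyc i_root sink_a; rewrite /outflow.
under eq_bigr do rewrite !sink_graft // (sink_id i_root) eqxx.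
rewrite (sum_off_tree (p := p)) => [|m /eqP -> //]; last by rewrite eqxx.
by apply: eq_bigr => m /negPf ->.
Qed.

Lemma forest_sum_identity :
  forest_sum i j + \sum_m W i m * (forest_sum i j - forest_sum m j) = delta i * forest_total.
Proof.
have flow : \sum_m W i m * (forest_sum i j - forest_sum m j) =
            \sum_(p | acyclic p) fweight p * outflow p.
  under eq_bigr do rewrite !forest_sumE -sumrB mulr_sumr.
  rewrite exchange_big; apply: eq_bigr => p _; rewrite /outflow mulr_sumr.
  by apply: eq_bigr => m _; ring.
have flow_root : \sum_(p | acyclic p && (p i == i)) fweight p * outflow p =
                 \sum_(p | acyclic p && (p i != i)) fweight p * (delta i - delta (sink p i)).
  rewrite sum_acyclic_nonroot; apply: eq_bigr => p /andP[acyc /eqP i_root].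
  by rewrite outflow_root.
have flow_nonroot : \sum_(p | acyclic p && (p i != i)) fweight p * outflow p = 0.
  rewrite sum_acyclic_nonroot big1 // => p /andP[acyc /eqP i_root].
  rewrite -[RHS](mulr0 (fweight p)) -[in RHS](sumr_skew (fun a => sink p a != i)
    (fun a => W i a * delta (sink p a)) (W i)) mulr_sumr.
  apply: eq_bigr => a sink_a.
  rewrite fweight_graft ?(off_tree_neq i_root sink_a) ?outflow_graft //.
  by rewrite !mulr_sumr; apply: eq_bigr => m _; ring.
rewrite flow (bigID (fun p => p i == i)) /= flow_root flow_nonroot addr0.
rewrite forest_sumE /forest_total !(bigID (fun p => p i == i) (fun p => acyclic p)) /=.
rewrite -addrA -big_split mulrDr !mulr_sumr /=.
congr (_ + _); apply: eq_bigr => p /andP[_].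
  by move/eqP/sink_id ->; rewrite mulrC.
by move=> _; ring.
Qed.

End ForestIdentity.

Lemma fweightZ (R : comPzRingType) n (W : 'M[R]_n) (c : R) p :
  fweight (c *: W) p = c ^+ #|nonroots p| * fweight W p.
Proof. by rewrite /fweight -prodr_const -big_split; apply: eq_bigr => v _; rewrite mxE. Qed.

Section InForests.
Variables (C : numClosedFieldType) (n : nat) (W : 'M[C]_n).
Implicit Types (p : {ffun 'I_n -> 'I_n}) (F : {set 'I_n * 'I_n}) (i j v x y : 'I_n).

Definition arcs p : {set 'I_n * 'I_n} := [set a | (p a.1 == a.2) && (a.1 != a.2)].

Definition of_arcs F : {ffun 'I_n -> 'I_n} :=
  [ffun v => if [pick a in F | a.1 == v] is Some a then a.2 else v].

Lemma arcsE p : arcs p = [set (v, p v) | v in nonroots p].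
Proof.
apply/setP => [[x y]]; rewrite inE /=; apply/idP/imsetP => [/andP[/eqP <- moved]|[v]].
  by exists x; rewrite // inE eq_sym.
by rewrite inE => moved [-> ->]; rewrite eqxx eq_sym.
Qed.

Lemma card_arcs p : #|arcs p| = #|nonroots p|.
Proof. by rewrite arcsE card_imset // => x y []. Qed.

Lemma sg_weight_arcs p : sg_weight W (arcs p) = fweight W p.
Proof. by rewrite /sg_weight arcsE big_imset // => x y _ _ []. Qed.

Lemma arcsK : cancel arcs of_arcs.
Proof.
move=> p; apply/ffunP => v; rewrite ffunE; case: pickP => [a|none].
  by rewrite !inE => /andP[/andP[/eqP <- _] /eqP ->].
case: (eqVneq (p v) v) => // moved.
by have := none (v, p v); rewrite !inE /= !eqxx eq_sym moved.
Qed.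

Lemma outdeg_arcs p v : outdeg (arcs p) v = (p v != v).
Proof.
rewrite /outdeg; case: (eqVneq (p v) v) => [fixed|moved] /=.
  apply/eqP; rewrite cards_eq0; apply/eqP/setP => [[x y]]; rewrite !inE /=.
  apply/negbTE/negP => /andP[/andP[/eqP <- moved] /eqP xv].
  by rewrite xv fixed eqxx in moved.
suff -> : [set a in arcs p | a.1 == v] = [set (v, p v)] by rewrite cards1.
apply/setP => [[x y]]; rewrite !inE /= xpair_eqE.
apply/idP/idP => [/andP[/andP[/eqP <- _] /eqP ->]|/andP[/eqP -> /eqP ->]].
  by rewrite !eqxx.
by rewrite !eqxx eq_sym moved.
Qed.

Let arc_rel F := [rel x y | ((x, y) \in F) || ((y, x) \in F)].

Lemma arcs_closed p (P : pred 'I_n) : (forall v, P (p v) = P v) -> closed (arc_rel (arcs p)) P.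
Proof. by move=> Pp x y /orP[] /[!inE] /= /andP[/eqP <- _]; rewrite -!topredE /= Pp. Qed.

Lemma weakly_conn_arcs p x y : acyclic p -> weakly_conn (arcs p) x y = (sink p x == sink p y).
Proof.
move=> acyc; apply/idP/idP => [conn|/eqP same].
  have closed_x : closed (arc_rel (arcs p)) (fun v => sink p v == sink p x).
    by apply: arcs_closed => v; rewrite sink_step.
  by have := closed_connect closed_x conn; rewrite -!topredE /= eqxx eq_sym => <-.
have to_sink v : connect (arc_rel (arcs p)) v (sink p v).
  move: v; apply: (acyclic_ind acyc) => v IH; case: (eqVneq (p v) v) => [fixed|moved].
    by rewrite sink_id.
  rewrite -sink_step //; apply: connect_trans (IH moved); apply: connect1.
  by rewrite /= inE /= eqxx eq_sym moved.
have sym : connect_sym (arc_rel (arcs p)) by apply: sym_connect_sym => u w /=; rewrite orbC.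
by apply: connect_trans (to_sink x) _; rewrite same sym.
Qed.

Lemma in_tree_rooted_arcs p i j : acyclic p -> in_tree_rooted (arcs p) i j = (sink p i == j).
Proof.
move=> acyc; rewrite /in_tree_rooted weakly_conn_arcs // outdeg_arcs.
case: (eqVneq (p j) j) => [fixed|moved] /=; first by rewrite (sink_id fixed) andbT.
by rewrite andbF; apply/esym; apply: contraNF moved => /eqP <-; rewrite sink_fixed.
Qed.

Definition in_graph p := [forall v, (p v != v) ==> (W v (p v) != 0)].

Lemma in_forest_arcs p : in_forest W (arcs p) = acyclic p && in_graph p.
Proof.
apply/andP/andP => [[/forallP arcs_ok /forallP trees]|[acyc /forallP ok]]; split.
- apply/forallP => v; have /existsP[r /andP[r_comp /andP[r_out _]]] := trees v.
  have closed_term : closed (arc_rel (arcs p)) (terminates p).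
    by apply: arcs_closed => u; rewrite terminates_step.
  rewrite inE in r_comp; have := closed_connect closed_term r_comp; rewrite -!topredE /= => ->.
  by apply/terminatesP; exists 0%N; move: r_out; rewrite outdeg_arcs eqb0 negbK => /eqP.
- apply/forallP => v; apply/implyP => moved.
  by have := arcs_ok (v, p v); rewrite inE /= eqxx eq_sym moved /is_arc /= eq_sym moved.
- apply/forallP => [[x y]]; apply/implyP; rewrite inE /= => /andP[/eqP <- moved].
  by rewrite /is_arc /= moved (implyP (ok x)) // eq_sym.
apply/forallP => x; apply/existsP; exists (sink p x).
have root_x := sink_fixed x acyc.
rewrite inE weakly_conn_arcs // (sink_id root_x) eqxx outdeg_arcs root_x eqxx /=.
apply/forall_inP => v; rewrite inE weakly_conn_arcs // => /eqP same.
apply/implyP => v_nonroot; rewrite outdeg_arcs; case: (eqVneq (p v) v) => // fixed.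
by rewrite same (sink_id fixed) eqxx in v_nonroot.
Qed.

Lemma outdeg_forest F v : in_forest W F -> (outdeg F v <= 1)%N.
Proof.
case/andP => _ /forallP/(_ v)/existsP[r /andP[_ /andP[/eqP r_out /forall_inP out1]]].
case: (eqVneq v r) => [->|vr]; first by rewrite r_out.
by rewrite (eqP (implyP (out1 v _) vr)) // inE /weakly_conn connect0.
Qed.

Lemma of_arcsK F : in_forest W F -> arcs (of_arcs F) = F.
Proof.
move=> forest; apply/setP => [[x y]]; rewrite inE ffunE /=.
case: pickP => [[x' y'] /andP[xy' /eqP /= ex]|none] /=; last first.
  by have := none (x, y); rewrite /= eqxx andbT => ->; case: eqP.
subst x'; apply/idP/idP => [/andP[/eqP <- //]|xy].
have /card_le1_eqP uniq_out := outdeg_forest x forest.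
have /= := uniq_out (x, y') (x, y); rewrite !inE xy' xy eqxx => /(_ isT isT) [<-].
by rewrite eqxx; case/andP: forest => /forall_inP/(_ _ xy)/andP[].
Qed.

Lemma fweight_off_graph p : ~~ in_graph p -> fweight W p = 0.
Proof.
rewrite negb_forall => /existsP[v]; rewrite negb_imply negbK => /andP[moved W0].
by apply/eqP/prodf_eq0; exists v; rewrite ?inE.
Qed.

Lemma Qtau_in_forests (tau : C) i j : Qtau W tau i j =
  \sum_(F | in_forest W F && in_tree_rooted F i j) tau ^+ #|F| * sg_weight W F.
Proof.
have card_lt F : (#|F| < (n * n).+1)%N.
  by rewrite ltnS (leq_trans (max_card _)) // card_prod card_ord.
rewrite (partition_big (fun F => Ordinal (card_lt F)) xpredT) //= summxE.
apply: eq_bigr => k _; rewrite !mxE mulr_sumr.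
by apply: eq_big => [F|F /andP[/andP[_ /eqP <-] _]] //; rewrite -val_eqE /= andbAC.
Qed.

Lemma Qtau_forest_sum (tau : C) i j : Qtau W tau i j = forest_sum (tau *: W) i j.
Proof.
rewrite Qtau_in_forests (reindex_onto arcs of_arcs) => [|F /andP[forest _]]; last exact: of_arcsK.
rewrite /forest_sum big_mkcond [RHS]big_mkcond; apply: eq_bigr => p _.
rewrite arcsK eqxx andbT in_forest_arcs fweightZ card_arcs sg_weight_arcs.
case: (boolP (acyclic p)) => //= acyc; rewrite in_tree_rooted_arcs //.
by case: (boolP (in_graph p)) => //= off; rewrite fweight_off_graph // mulr0 if_same.
Qed.

End InForests.

Lemma laplacian_mulmx (C : numClosedFieldType) n (W : 'M[C]_n) p (A : 'M[C]_(n, p)) i j :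
  (laplacian W *m A) i j = \sum_m W i m * (A i j - A m j).
Proof.
rewrite mxE (bigD1 i) //= [RHS](bigD1 i) //= subrr mulr0 add0r !mxE eqxx mulr_suml -big_split.
by apply: eq_bigr => m mi; rewrite !mxE eq_sym (negPf mi) mulrBr mulNr.
Qed.

Lemma Qtau_identity (C : numClosedFieldType) n (W : 'M[C]_n) (tau : C) :
  Qtau W tau + tau *: (laplacian W *m Qtau W tau) = (forest_total (tau *: W))%:M.
Proof.
apply/matrixP => i j; rewrite [LHS]mxE [X in _ + X]mxE laplacian_mulmx [RHS]mxE.
rewrite -mulr_natl -forest_sum_identity Qtau_forest_sum mulr_sumr; congr (_ + _).
by apply: eq_bigr => m _; rewrite !Qtau_forest_sum mxE mulrA.
Qed.

Theorem proposition13 (C : numClosedFieldType) (n : nat) (W : 'M[C]_n)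
  (hn : (1 < n)%N)
  (hloop : forall i, W i i = 0)
  (hpos : forall i j, 0 <= W i j)
  (lambda : C) (hlam0 : lambda != 0)
  (heig : eigenvalue (laplacian W) lambda)
  (j : 'I_n) (hj : col j (Qtau W (- lambda^-1)) != 0) :
  laplacian W *m col j (Qtau W (- lambda^-1)) = lambda *: col j (Qtau W (- lambda^-1)).
Proof.
set tau := - lambda^-1; set L := laplacian W; set Q := Qtau W tau.
have tau_lambda : tau * lambda = -1 by rewrite mulNr mulVf.
have c0 : forest_total (tau *: W) = 0.
  have [v vL v0] := eigenvalueP heig.
  have : v *m (Q + tau *: (L *m Q)) = 0.
    by rewrite mulmxDr -scalemxAr mulmxA vL -scalemxAl scalerA tau_lambda scaleN1r addrN.
  by rewrite Qtau_identity mul_mx_scalar => /eqP; rewrite scaler_eq0 (negPf v0) orbF => /eqP.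
have LQ : L *m Q = lambda *: Q.
  have := congr1 (fun M => lambda *: M) (Qtau_identity W tau).
  rewrite c0 raddf0 scaler0 scalerDr scalerA mulrC tau_lambda scaleN1r => /eqP.
  by rewrite subr_eq0 => /eqP.
by rewrite !colE mulmxA LQ scalemxAl.
Qed.
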